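(* For $\lambda\in\mathbb{C}$ (not an eigenvalue of $D_{1,1}$), we can express \[ p_N(-\tau_i;\ \lambda)=\frac{r_i(\lambda)}{s(\lambda)},\quad i=1,\ldots,m, \] where $s$ is a monic polynomial of degree $N$ and $r_i$, $i=1,\ldots,m$, are polynomials of degree smaller than or equal to $N$. Furthermore, \[ s(\lambda)=\det(\lambda I-D_{1,1}) \] and \[ \left[\begin{array}{c} p_N(\theta_{N,-N};\ \lambda)\\ \vdots\\ p_N(\theta_{N,-1};\ \lambda)\end{array}\right]=(\lambda I-D_{1,1})^{-1}D_{1,2}. \]
   Context: Let $\tau_1,\ldots,\tau_m>0$ be delays and $\tau_{\max}=\max_i\tau_i$. Given a positive integer $N$, let $\theta_{N,i}$, $i=-N,\ldots,0$, be $N+1$ distinct points in $[-\tau_{\max},0]$ with $\theta_{N,0}=0$. Let $l_{N,k}$, $k\in\{-N,\ldots,0\}$, be the Lagrange polynomials of degree $N$ on these points ($l_{N,k}(\theta_{N,i})=1$ if $i=k$, $0$ otherwise). Let $D$ be the $(N+1)\times(N+1)$ differentiation matrix with entries $d_{i,k}=l'_{N,k}(\theta_{N,i})$, $i,k\in\{-N,\ldots,0\}$, partitioned as $D=\begin{bmatrix}D_{1,1}&D_{1,2}\\ D_{2,1}&D_{2,2}\end{bmatrix}$, where $D_{1,1}$ is the $N\times N$ block with $i,k\in\{-N,\ldots,-1\}$ and $D_{1,2}$ is the $N\times 1$ column with $i\in\{-N,\ldots,-1\}$, $k=0$. For $\lambda\in\mathbb{C}$, $p_N(\cdot;\lambda)$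 denotes the polynomial of degree $N$ satisfying $p_N(0;\lambda)=1$ and $p_N'(\theta_{N,i};\lambda)=\lambda\, p_N(\theta_{N,i};\lambda)$ for $i\in\{-N,\ldots,-1\}$ (a collocation approximation of $e^{\lambda t}$). *)

From HB Require Import structures.
From mathcomp Require Export all_boot all_order all_algebra.
From mathcomp Require Export complex reals.

Set Implicit Arguments.
Unset Strict Implicit.
Unset Printing Implicit Defensive.
Import Order.TTheory GRing.Theory Num.Theory.
Local Open Scope ring_scope.

(* Index convention: the node theta_{N,i}, i in {-N,...,0}, is represented by
   theta j with j : 'I_N.+1 and j = i + N.  Thus ord_max corresponds to
   theta_{N,0} = 0 and the indices 0..N-1 (= widen_ord of 'I_N) correspond to
   -N, ..., -1. *)

Section Collocation.
Variable R : realType.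
Variable N : nat.
Variable theta : 'I_N.+1 -> R.

Definition thetaC (j : 'I_N.+1) : R[i] := ((theta j)%:C)%C.

Definition lagrange (k : 'I_N.+1) : {poly R[i]} :=
  \prod_(j < N.+1 | j != k) (('X - (thetaC j)%:P) * ((thetaC k - thetaC j)^-1)%:P).

Definition diffmx : 'M[R[i]]_N.+1 :=
  \matrix_(i, k) ((lagrange k)^`()).[thetaC i].

Definition lowN (i : 'I_N) : 'I_N.+1 := widen_ord (leqnSn N) i.

Definition D11 : 'M[R[i]]_N := \matrix_(i, k) diffmx (lowN i) (lowN k).

Definition D12 : 'cV[R[i]]_N := \col_i diffmx (lowN i) ord_max.

Definition is_pN (lambda : R[i]) (p : {poly R[i]}) : Prop :=
  (size p <= N.+1)%N /\ p.[0] = 1 /\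
  forall i : 'I_N, p^`().[thetaC (lowN i)] = lambda * p.[thetaC (lowN i)].

End Collocation.

From Pilot Require Import Defs.
From HB Require Import structures.
From mathcomp Require Import all_boot all_order all_algebra complex reals.
From mathcomp Require Import zify.

Set Implicit Arguments.
Unset Strict Implicit.
Unset Printing Implicit Defensive.
Import Order.TTheory GRing.Theory Num.Theory.
Local Open Scope ring_scope.

(* Differentiating the Lagrange expansion of a polynomial p of degree <= N with
   p(0) = 1 shows p'(theta_j) = (D11 P + D12)_j, where P is the column of its
   values at theta_{-N}, ..., theta_{-1}; so the collocation conditions say
   exactly (lambda I - D11) P = D12.  By Cramer's rule
   P = adj(lambda I - D11) D12 / det(lambda I - D11), whose numerators have
   degree < N in lambda, and the Lagrange expansion
   p(y) = sum_k P_k l_k(y) + l_0(y) turns this into r(lambda) / s(lambda). *)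

Lemma size_sum_leq (R : nzSemiRingType) (I : Type) (r : seq I) (P : pred I)
    (F : I -> {poly R}) n :
  (forall i, P i -> (size (F i) <= n)%N) ->
  (size (\sum_(i <- r | P i) F i)%R <= n)%N.
Proof.
move=> Fn; elim/big_rec: _ => [|i q Pi Hq]; first by rewrite size_poly0.
by apply: leq_trans (size_polyD _ _) _; rewrite geq_max Fn.
Qed.

Lemma size_prod_leq_card (R : nzSemiRingType) (I : finType) (P : pred I)
    (F : I -> {poly R}) :
  (forall i, P i -> (size (F i) <= 2)%N) ->
  (size (\prod_(i | P i) F i)%R <= #|P|.+1)%N.
Proof.
move=> F2; rewrite -sum1_card.
elim/big_rec2: _ => [|i m q Pi IHq]; first by rewrite size_poly1.
apply: leq_trans (size_polyMleq _ _) _; have := F2 i Pi; lia.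
Qed.

Lemma size_det_leq (R : comNzRingType) n (M : 'M[{poly R}]_n) :
  (forall i j, (size (M i j) <= 2)%N) -> (size (\det M) <= n.+1)%N.
Proof.
move=> M2; apply: size_sum_leq => s _; rewrite size_Msign.
by apply: leq_trans (size_prod_leq_card _) _; rewrite ?cardT ?size_enum_ord.
Qed.

Section Resolvent.
Variables (F : fieldType) (n : nat) (A : 'M[F]_n).

Lemma size_char_poly_mx_entry i j : (size (char_poly_mx A i j) <= 2)%N.
Proof.
rewrite !mxE; apply: leq_trans (size_polyD _ _) _.
rewrite geq_max size_polyN size_polyC (leq_trans (leq_b1 _)) // andbT.
by case: (i == j); rewrite ?mulr1n ?mulr0n ?size_polyX ?size_poly0.
Qed.

Lemma size_adj_char_poly_mx i j : (size (\adj (char_poly_mx A) i j) <= n)%N.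
Proof.
rewrite mxE /cofactor size_Msign.
apply: leq_trans (size_det_leq _) _ => [a b|].
  by have := size_char_poly_mx_entry (lift j a) (lift i b); rewrite !mxE.
by rewrite prednK // (leq_ltn_trans _ (ltn_ord i)).
Qed.

Lemma size_adj_char_poly_mx_mul p (B : 'M[F]_(n, p)) i k :
  (size ((\adj (char_poly_mx A) *m map_mx polyC B) i k) <= n)%N.
Proof.
rewrite mxE; apply: size_sum_leq => j _; rewrite [map_mx _ _ _ _]mxE mulrC mul_polyC.
exact: leq_trans (size_scale_leq _ _) (size_adj_char_poly_mx _ _).
Qed.

Lemma horner_char_poly_mx l : map_mx (horner_eval l) (char_poly_mx A) = l%:M - A.
Proof.
by apply/matrixP => i j; rewrite !mxE /= horner_evalE !hornerE hornerMn hornerX.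
Qed.

Lemma horner_char_poly l : (char_poly A).[l] = \det (l%:M - A).
Proof. by rewrite -horner_char_poly_mx det_map_mx. Qed.

Lemma unitmx_char_mx l : ~~ eigenvalue A l -> l%:M - A \in unitmx.
Proof. by rewrite eigenvalue_root_char /root horner_char_poly unitmxE unitfE. Qed.

Lemma resolvent_char_poly p (B : 'M[F]_(n, p)) l : ~~ eigenvalue A l ->
  invmx (l%:M - A) *m B =
  (char_poly A).[l]^-1 *:
    map_mx (horner_eval l) (\adj (char_poly_mx A) *m map_mx polyC B).
Proof.
move=> /unitmx_char_mx Mu; rewrite /invmx Mu horner_char_poly -scalemxAl.
rewrite map_mxM map_mx_adj horner_char_poly_mx.
by congr (_ *: (_ *m _)); apply/matrixP => i j; rewrite !mxE /= horner_evalE hornerC.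
Qed.

End Resolvent.

Section Collocation.
Variables (R : realType) (N : nat) (theta : 'I_N.+1 -> R).
Hypothesis theta_inj : injective theta.
Hypothesis theta_max : theta ord_max = 0.
Local Notation node := (thetaC theta).
Local Notation l := (Defs.lagrange theta).

Lemma thetaC_inj : injective node.
Proof. by move=> a b /complexI /theta_inj. Qed.

Lemma thetaC_max : node ord_max = 0.
Proof. by rewrite /thetaC theta_max. Qed.

Lemma lowN_inj : injective (@lowN N).
Proof. by move=> j k [] /val_inj. Qed.

Lemma lowN_neq_max (j : 'I_N) : (lowN j == ord_max) = false.
Proof. by apply/negbTE; rewrite -val_eqE /= neq_ltn ltn_ord. Qed.

Lemma horner_lagrange_node j k : (l k).[node j] = (j == k)%:R.
Proof.
rewrite /Defs.lagrange horner_prod; have [->|njk] := eqVneq j k.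
  apply: big1 => i ik; rewrite hornerM hornerXsubC hornerC mulfV // subr_eq0.
  by rewrite (inj_eq thetaC_inj) eq_sym.
by rewrite (bigD1 j) //= hornerM hornerXsubC hornerC subrr !mul0r.
Qed.

Lemma size_lagrange k : (size (l k) <= N.+1)%N.
Proof.
apply: leq_trans (size_prod_leq_card _) _ => [j _|].
  by rewrite mulrC mul_polyC (leq_trans (size_scale_leq _ _)) ?size_XsubC.
by rewrite ltnS (eq_card (B := predC1 k)) ?cardC1 ?card_ord // => j; rewrite !inE.
Qed.

Lemma lagrange_interpolation (p : {poly R[i]}) : (size p <= N.+1)%N ->
  p = \sum_k p.[node k] *: l k.
Proof.
move=> sp; apply/eqP; rewrite -subr_eq0; apply/eqP.
apply: (@roots_geq_poly_eq0 _ _ [seq node k | k <- enum 'I_N.+1]).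
- apply/allP => _ /mapP [j _ ->]; rewrite /root hornerD hornerN horner_sum.
  rewrite (bigD1 j) //= big1 => [|k kj]; last first.
    by rewrite hornerZ horner_lagrange_node eq_sym (negPf kj) mulr0.
  by rewrite hornerZ horner_lagrange_node eqxx mulr1 addr0 subrr.
- by rewrite map_inj_uniq ?enum_uniq //; apply: thetaC_inj.
rewrite size_map size_enum_ord; apply: leq_trans (size_polyD _ _) _.
rewrite geq_max sp size_polyN; apply: size_sum_leq => k _.
exact: leq_trans (size_scale_leq _ _) (size_lagrange k).
Qed.

Lemma lagrange_expansion (p : {poly R[i]}) : (size p <= N.+1)%N ->
  p = \sum_(k < N) p.[node (lowN k)] *: l (lowN k) + p.[0] *: l ord_max.
Proof.
by move=> sp; rewrite {1}(lagrange_interpolation sp) big_ord_recr /= thetaC_max.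
Qed.

Definition low_nodes_col (p : {poly R[i]}) : 'cV[R[i]]_N := \col_j p.[node (lowN j)].

Lemma horner_deriv_low (p : {poly R[i]}) k : (size p <= N.+1)%N -> p.[0] = 1 ->
  p^`().[node (lowN k)] = (D11 theta *m low_nodes_col p + D12 theta) k 0.
Proof.
move=> sp p0; rewrite {1}(lagrange_expansion sp) p0 scale1r.
rewrite derivD raddf_sum hornerD horner_sum /= !mxE; congr (_ + _).
by apply: eq_bigr => j _; rewrite derivZ hornerZ !mxE mulrC.
Qed.

Lemma collocationP lambda (p : {poly R[i]}) : (size p <= N.+1)%N -> p.[0] = 1 ->
  (forall k, p^`().[node (lowN k)] = lambda * p.[node (lowN k)]) <->
  (lambda%:M - D11 theta) *m low_nodes_col p = D12 theta.
Proof.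
move=> sp p0; rewrite mulmxBl mul_scalar_mx; split=> [colloc | HM k].
  apply/matrixP => k j; rewrite (ord1 j) !mxE -colloc horner_deriv_low // !mxE.
  by rewrite addrAC subrr add0r.
by rewrite horner_deriv_low // -HM addrC subrK !mxE.
Qed.

Definition pN_of_low_nodes (P : 'cV[R[i]]_N) : {poly R[i]} :=
  \sum_(k < N) P k ord0 *: l (lowN k) + l ord_max.

Lemma size_pN_of_low_nodes P : (size (pN_of_low_nodes P) <= N.+1)%N.
Proof.
apply: leq_trans (size_polyD _ _) _; rewrite geq_max size_lagrange andbT.
by apply: size_sum_leq => k _; apply: leq_trans (size_scale_leq _ _) (size_lagrange _).
Qed.

Lemma horner_pN_of_low_nodes_0 P : (pN_of_low_nodes P).[0] = 1.
Proof.
rewrite -thetaC_max hornerD horner_sum horner_lagrange_node eqxx big1 ?add0r // => k _.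
by rewrite hornerZ horner_lagrange_node eq_sym lowN_neq_max mulr0.
Qed.

Lemma pN_of_low_nodesK : cancel pN_of_low_nodes low_nodes_col.
Proof.
move=> P; apply/matrixP => j i; rewrite (ord1 i) mxE hornerD horner_sum horner_lagrange_node.
rewrite lowN_neq_max addr0 (bigD1 j) //= big1 => [|k kj]; last first.
  by rewrite hornerZ horner_lagrange_node (inj_eq lowN_inj) eq_sym (negPf kj) mulr0.
by rewrite hornerZ horner_lagrange_node eqxx mulr1 addr0.
Qed.

Lemma pN_exists lambda :
  ~~ eigenvalue (D11 theta) lambda -> exists p, is_pN theta lambda p.
Proof.
move=> /unitmx_char_mx Mu; pose P := invmx (lambda%:M - D11 theta) *m D12 theta.
exists (pN_of_low_nodes P); split; first exact: size_pN_of_low_nodes.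
split; first exact: horner_pN_of_low_nodes_0.
apply/collocationP; rewrite ?size_pN_of_low_nodes ?horner_pN_of_low_nodes_0 //.
by rewrite pN_of_low_nodesK mulKVmx.
Qed.

Lemma pN_low_nodes lambda p :
  ~~ eigenvalue (D11 theta) lambda -> is_pN theta lambda p ->
  low_nodes_col p = invmx (lambda%:M - D11 theta) *m D12 theta.
Proof.
by move=> /unitmx_char_mx Mu [sp [p0 /collocationP <-]] //; rewrite mulKmx.
Qed.

Definition pN_numerator (y : R[i]) : {poly R[i]} :=
  \sum_(k < N) (l (lowN k)).[y] *:
     (\adj (char_poly_mx (D11 theta)) *m map_mx polyC (D12 theta)) k ord0
  + (l ord_max).[y] *: char_poly (D11 theta).

Lemma size_pN_numerator y : (size (pN_numerator y) <= N.+1)%N.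
Proof.
apply: leq_trans (size_polyD _ _) _; rewrite geq_max; apply/andP; split.
  apply: size_sum_leq => k _; apply: leq_trans (size_scale_leq _ _) _.
  exact: leq_trans (size_adj_char_poly_mx_mul _ _ _ _) (leqnSn N).
by apply: leq_trans (size_scale_leq _ _) _; rewrite size_char_poly.
Qed.

Lemma horner_pN lambda p y :
  ~~ eigenvalue (D11 theta) lambda -> is_pN theta lambda p ->
  p.[y] = (pN_numerator y).[lambda] / (char_poly (D11 theta)).[lambda].
Proof.
move=> nev pNp; have [sp [p0 _]] := pNp.
have sN0 : (char_poly (D11 theta)).[lambda] != 0.
  by move: nev; rewrite eigenvalue_root_char.
rewrite /pN_numerator hornerD hornerZ mulrDl mulfK //.
rewrite {1}(lagrange_expansion sp) p0 scale1r hornerD; congr (_ + _).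
rewrite 2!horner_sum mulr_suml; apply: eq_bigr => k _.
have /matrixP/(_ k ord0) := pN_low_nodes nev pNp.
rewrite resolvent_char_poly // 3!mxE horner_evalE => ->.
by rewrite !hornerZ mulrC mulrCA mulrC.
Qed.

End Collocation.

Theorem proposition3 (R : realType) (m N : nat) (tau : 'I_m -> R)
    (theta : 'I_N.+1 -> R) :
  (0 < m)%N -> (0 < N)%N ->
  (forall i, 0 < tau i) ->
  injective theta ->
  theta ord_max = 0 ->
  (forall j, - (\big[Num.max/0]_(i < m) tau i) <= theta j <= 0) ->
  exists (s : {poly R[i]}) (r : 'I_m -> {poly R[i]}),
    [/\ s \is monic, size s = N.+1,
        (forall i, (size (r i) <= N.+1)%N),
        (forall lambda : R[i], s.[lambda] = \det (lambda%:M - D11 theta)) &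
        forall lambda : R[i], ~~ eigenvalue (D11 theta) lambda ->
          (exists p, is_pN theta lambda p) /\
          forall p, is_pN theta lambda p ->
            (forall i, p.[- ((tau i)%:C)%C] = (r i).[lambda] / s.[lambda]) /\
            \col_(j < N) p.[thetaC theta (lowN j)]
              = invmx (lambda%:M - D11 theta) *m D12 theta].
Proof.
move=> _ _ _ theta_inj theta_max _.
exists (char_poly (D11 theta)), (fun i => pN_numerator theta (- ((tau i)%:C)%C)).
split=> [||i|lambda|lambda nev].
- exact: char_poly_monic.
- exact: size_char_poly.
- exact: size_pN_numerator.
- exact: horner_char_poly.
split=> [|p pNp]; first exact: pN_exists.
by split=> [i|]; [apply: horner_pN | apply: pN_low_nodes].
Qed.
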